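(* Assume A2, let $x\in\mathcal I$, suppose the $x$-threshold word $\pi$ exists, and let $n\ge 1$. Then: (1) if $x\le y_{10^{n-1}}$ then $0^n$ does not occur as a factor of $\pi^\omega$; (2) if $x\ge y_{010^{n-1}}$ then $10^{n-1}1$ does not occur as a factor of $\pi^\omega$; (3) if $x\ge y_{01^{n-1}}$ then $1^n$ does not occur as a factor of $\pi^\omega$; (4) if $x\le y_{101^{n-1}}$ then $01^{n-1}0$ does not occur as a factor of $\pi^\omega$. (Here $0^0=1^0=\epsilon$.)
   Context: Words are finite strings over $\{0,1\}$; $\epsilon$ is the empty word, $w_k$ the $k$-th letter, $w^\omega$ the infinite repetition of $w$. Let $\mathcal I\subseteq\mathbb R$ be an interval and $\phi_0,\phi_1:\mathcal I\to\mathcal I$. For a word $w$ put $\phi_w:=\phi_{w_{|w|}}\circ\cdots\circ\phi_{w_1}$ (the first letter is applied first), $\phi_\epsilon=\mathrm{id}$. Assumption A2: for all $x<y$ in $\mathcal I$ and $k\in\{0,1\}$, $\phi_k(x)<\phi_k(y)$ and $\phi_k(y)-\phi_k(x)<y-x$; moreover $\phi_0,\phi_1$ have fixed points $y_0,y_1\in\mathcal I$ with $y_1<y_0$. Under A2, for every non-empty word $w$ the map $\phi_w$ has a unique fixed point in $\mathcal I$, denoted $y_w$. The $x$-threshold orbit is the sequence $(x_k)_{k\ge1}$ with $x_1=\phi_1(x)$ and $x_{k+1}=\phi_1(x_k)$ if $x_k\ge x$, $x_{k+1}=\phi_0(x_k)$ if $x_k<x$. The $x$-threshold word is the shortest (finite,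 non-empty) word $\pi$ such that $x_{k+1}=\phi_{(\pi^\omega)_k}(x_k)$ for all $k\ge1$, when such a word exists. *)

(* real numbers. Letters 0/1 are encoded as false/true. *)
From Stdlib Require Import Reals List Arith.
Import ListNotations.
Open Scope R_scope.

Definition word := list bool.

Definition phiL (phi0 phi1 : R -> R) (b : bool) : R -> R :=
  if b then phi1 else phi0.

(* phi_w = phi_{w_|w|} o ... o phi_{w_1}: first letter applied first *)
Definition phiW (phi0 phi1 : R -> R) (w : word) (y : R) : R :=
  fold_left (fun acc b => phiL phi0 phi1 b acc) w y.

Definition is_interval (I : R -> Prop) : Prop :=
  forall a b c, I a -> I c -> a <= b -> b <= c -> I b.

Definition A2 (I : R -> Prop) (phi0 phi1 : R -> R) : Prop :=
  (forall y, I y -> I (phi0 y)) /\ (forall y, I y -> I (phi1 y)) /\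
  (forall (k : bool) a b, I a -> I b -> a < b ->
      phiL phi0 phi1 k a < phiL phi0 phi1 k b /\
      phiL phi0 phi1 k b - phiL phi0 phi1 k a < b - a) /\
  (exists y0 y1, I y0 /\ I y1 /\ phi0 y0 = y0 /\ phi1 y1 = y1 /\ y1 < y0).

Definition is_fixpt (I : R -> Prop) (phi0 phi1 : R -> R) (w : word) (y : R) : Prop :=
  I y /\ phiW phi0 phi1 w y = y.

(* x-threshold orbit, shifted: orbit k = x_{k+1}, so orbit 0 = x_1 = phi1 x *)
Fixpoint orbit (phi0 phi1 : R -> R) (x : R) (k : nat) : R :=
  match k with
  | O => phi1 x
  | S k' => let xk := orbit phi0 phi1 x k' in
            if Rle_dec x xk then phi1 xk else phi0 xk
  end.

(* (w^omega)_i, 0-indexed: (w^omega)_(i+1) in the paper's 1-indexed notation *)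
Definition omega (w : word) (i : nat) : bool :=
  nth (i mod length w) w false.

(* x_{k+1} = phi_{(pi^omega)_k}(x_k) for all k >= 1 (written with k = j+1) *)
Definition follows (phi0 phi1 : R -> R) (x : R) (pi : word) : Prop :=
  forall j : nat,
    orbit phi0 phi1 x (S j) = phiL phi0 phi1 (omega pi j) (orbit phi0 phi1 x j).

Definition threshold_word (phi0 phi1 : R -> R) (x : R) (pi : word) : Prop :=
  pi <> [] /\ follows phi0 phi1 x pi /\
  (forall pi' : word, pi' <> [] -> follows phi0 phi1 x pi' ->
     (length pi <= length pi')%nat).

Definition factor_of_omega (u pi : word) : Prop :=
  exists i : nat, forall j : nat, (j < length u)%nat ->
    omega pi (i + j) = nth j u false.

(* Write x_0 := x and let t_k be the threshold letter at x_k, so x_{k+1} = phi_{t_k}(x_k).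
   If phi_w has a fixed point y with x <= y (resp. y <= x), then phi_w maps [x, oo)
   (resp. (-oo, x)) into itself, since it moves every point toward y without overshooting.
   So once the threshold sequence has read a word w = b v from a point on the b-side of x,
   the next letter is b again.  Together with t_0 = 1, and t_1 = 0 when some y_(0v) <= x,
   an induction on the position excludes each of the four patterns from the threshold
   sequence; for 10^(n-1)1 and 01^(n-1)0 one first excludes 11 and 00, because phi_01
   preserves (-oo, x), resp. phi_10 preserves [x, oo), under the respective hypothesis.
   Finally pi^omega eventually agrees with the threshold sequence: once the orbit enters
   [y1, y0] it stays there and phi1 < phi0 on it, so the letter is forced; if it never
   enters, the threshold sequence is constant and minimality of pi makes pi that letter. *)

From Stdlib Require Import Reals List Lia Lra Classical.
Import ListNotations.
Open Scope R_scope.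

Definition occurs_at (s : nat -> bool) (k : nat) (u : word) : Prop :=
  forall e, (e < length u)%nat -> s (k + e)%nat = nth e u false.

Lemma neq_negb (a b : bool) : a <> b -> a = negb b.
Proof. destruct a, b; simpl; congruence. Qed.

Section BooleanSequences.

Variable s : nat -> bool.

Lemma occurs_at_nil k : occurs_at s k [].
Proof. intros e He; simpl in He; lia. Qed.

Lemma occurs_at_cons k a u :
  occurs_at s k (a :: u) <-> s k = a /\ occurs_at s (S k) u.
Proof.
  split.
  - intros H; split.
    + specialize (H 0%nat ltac:(simpl; lia)). rewrite Nat.add_0_r in H. exact H.
    + intros e He. replace (S k + e)%nat with (k + S e)%nat by lia.
      apply (H (S e)). simpl; lia.
  - intros [Ha Hu] [|e] He; [rewrite Nat.add_0_r; exact Ha|].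
    replace (k + S e)%nat with (S k + e)%nat by lia. apply Hu. simpl in He; lia.
Qed.

Lemma occurs_at_app k u v :
  occurs_at s k (u ++ v) <-> occurs_at s k u /\ occurs_at s (k + length u) v.
Proof.
  revert k; induction u as [|a u IH]; intros k; simpl.
  - rewrite Nat.add_0_r. pose proof (occurs_at_nil k). tauto.
  - rewrite !occurs_at_cons, IH.
    replace (S k + length u)%nat with (k + S (length u))%nat by lia. tauto.
Qed.

Lemma no_run (b : bool) (m i : nat) :
  s i = negb b ->
  (forall k, (i <= k)%nat -> occurs_at s k (negb b :: repeat b m) ->
     s (k + length (negb b :: repeat b m))%nat = negb b) ->
  forall k, (i <= k)%nat -> ~ occurs_at s k (repeat b (S m)).
Proof.
  intros Hi Hbar k Hk. induction Hk as [|k Hk IH]; intros Hocc.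
  - apply occurs_at_cons in Hocc as [Hb _]. rewrite Hi in Hb. destruct b; discriminate.
  - pose proof Hocc as Hrun. simpl repeat in Hrun.
    rewrite repeat_cons, occurs_at_app, repeat_length in Hrun.
    destruct Hrun as [Hfirst Hlast]. apply occurs_at_cons in Hlast as [Hlast _].
    destruct (Bool.bool_dec (s k) b) as [Ek|Ek].
    + apply IH, occurs_at_cons. split; assumption.
    + assert (Hk' : occurs_at s k (negb b :: repeat b m)).
      { apply occurs_at_cons; split; [apply neq_negb, Ek | exact Hfirst]. }
      specialize (Hbar k Hk Hk'). simpl length in Hbar. rewrite repeat_length in Hbar.
      replace (k + S m)%nat with (S k + m)%nat in Hbar by lia.
      rewrite Hlast in Hbar. destruct b; discriminate.
Qed.

Lemma no_enclosed_run (c : bool) (m i : nat) :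
  s i = negb c ->
  (forall k, (i <= k)%nat -> ~ occurs_at s k [c; c]) ->
  (forall k, (i <= k)%nat -> occurs_at s k (negb c :: c :: repeat (negb c) m) ->
     s (k + length (negb c :: c :: repeat (negb c) m))%nat = negb c) ->
  forall k, (i <= k)%nat -> ~ occurs_at s k (c :: repeat (negb c) m ++ [c]).
Proof.
  intros Hi Hcc Hbar k Hk Hocc. apply occurs_at_cons in Hocc as [Hc Hrest].
  destruct Hk as [|k Hk]; [rewrite Hi in Hc; destruct c; discriminate|].
  pose proof Hrest as Hblock. apply occurs_at_app in Hblock as [Hzeros Hlast].
  apply occurs_at_cons in Hlast as [Hlast _]. rewrite repeat_length in Hlast.
  destruct (Bool.bool_dec (s k) c) as [Ek|Ek].
  - apply (Hcc k Hk). rewrite !occurs_at_cons. repeat split; try assumption.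
    apply occurs_at_nil.
  - assert (Hk' : occurs_at s k (negb c :: c :: repeat (negb c) m)).
    { rewrite !occurs_at_cons. repeat split; try assumption. apply neq_negb, Ek. }
    specialize (Hbar k Hk Hk'). simpl length in Hbar. rewrite repeat_length in Hbar.
    replace (k + S (S m))%nat with (S (S k) + m)%nat in Hbar by lia.
    rewrite Hlast in Hbar. destruct c; discriminate.
Qed.

End BooleanSequences.

Lemma unbounded_of_drift (u : nat -> R) (d B : R) :
  0 < d -> (forall j, u j + d <= u (S j)) -> exists j, B <= u j.
Proof.
  intros Hd Hstep.
  assert (Hlin : forall j, u 0%nat + INR j * d <= u j).
  { induction j; [simpl; lra|]. rewrite S_INR. specialize (Hstep j). lra. }
  destruct (INR_unbounded ((B - u 0%nat) / d)) as [j Hj].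
  exists j. specialize (Hlin j).
  assert (B - u 0%nat = (B - u 0%nat) / d * d) by (field; lra).
  nra.
Qed.

Lemma omega_singleton b j : omega [b] j = b.
Proof. unfold omega. simpl length. rewrite Nat.mod_1_r. reflexivity. Qed.

Lemma omega_periodic pi i q : omega pi (i + q * length pi) = omega pi i.
Proof. unfold omega. rewrite Nat.Div0.mod_add. reflexivity. Qed.

Lemma threshold_word_singleton phi0 phi1 x pi b :
  threshold_word phi0 phi1 x pi -> follows phi0 phi1 x [b] ->
  ~ follows phi0 phi1 x [negb b] -> pi = [b].
Proof.
  intros [Hne [Hfol Hmin]] Hb Hnb.
  specialize (Hmin [b] ltac:(discriminate) Hb). simpl in Hmin.
  destruct pi as [|b' [|c r]]; [congruence| |simpl in Hmin; lia].
  destruct (Bool.bool_dec b' b) as [->|Hne']; [reflexivity|].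
  exfalso. apply Hnb. replace (negb b) with b' by (apply neq_negb, Hne'). exact Hfol.
Qed.

Section Dynamics.

Variables (I : R -> Prop) (phi0 phi1 : R -> R).
Hypothesis phi_in : forall b t, I t -> I (phiL phi0 phi1 b t).
Hypothesis phi_contract : forall b a c, I a -> I c -> a < c ->
  phiL phi0 phi1 b a < phiL phi0 phi1 b c /\
  phiL phi0 phi1 b c - phiL phi0 phi1 b a < c - a.

Local Notation phi := (phiL phi0 phi1).
Local Notation phiw := (phiW phi0 phi1).
Local Notation is_fix := (is_fixpt I phi0 phi1).

Lemma phiW_cons b w t : phiw (b :: w) t = phiw w (phi b t).
Proof. reflexivity. Qed.

Lemma phiW_in w t : I t -> I (phiw w t).
Proof.
  revert t; induction w as [|b w IH]; intros t Ht; [exact Ht|].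
  rewrite phiW_cons. auto.
Qed.

Lemma phiW_contract w a c : I a -> I c -> a < c ->
  phiw w a < phiw w c /\ phiw w c - phiw w a <= c - a.
Proof.
  revert a c; induction w as [|b w IH]; intros a c Ha Hc Hac.
  - change (a < c /\ c - a <= c - a). lra.
  - rewrite !phiW_cons. destruct (phi_contract b a c Ha Hc Hac).
    destruct (IH (phi b a) (phi b c)); auto. lra.
Qed.

Lemma phiW_le_mono w a c : I a -> I c -> a <= c -> phiw w a <= phiw w c.
Proof.
  intros Ha Hc [Hac| <-]; [|lra].
  apply Rlt_le, (phiW_contract w a c Ha Hc Hac).
Qed.

Lemma phiW_toward_fix_le w y t : is_fix w y -> I t -> t <= y -> t <= phiw w t <= y.
Proof.
  intros [Hy Hfix] Ht [Hty| ->]; [|lra].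
  destruct (phiW_contract w t y Ht Hy Hty). lra.
Qed.

Lemma phiW_toward_fix_ge w y t : is_fix w y -> I t -> y <= t -> y <= phiw w t <= t.
Proof.
  intros [Hy Hfix] Ht [Hyt| <-]; [|lra].
  destruct (phiW_contract w y t Hy Ht Hyt). lra.
Qed.

Lemma phiL_gt_below_fix b y t : I y -> phi b y = y -> I t -> t < y -> t < phi b t.
Proof. intros Hy Hfix Ht Hty. destruct (phi_contract b t y Ht Hy Hty). lra. Qed.

Lemma phiL_lt_above_fix b y t : I y -> phi b y = y -> I t -> y < t -> phi b t < t.
Proof. intros Hy Hfix Ht Hyt. destruct (phi_contract b y t Hy Ht Hyt). lra. Qed.

Lemma is_fixpt_repeat b y m : I y -> phi b y = y -> is_fix (repeat b m) y.
Proof.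
  intros Hy Hfix; split; [exact Hy|].
  induction m as [|m IH]; [reflexivity|]. simpl repeat. rewrite phiW_cons, Hfix. exact IH.
Qed.

Variables y0 y1 : R.
Hypotheses (I_y0 : I y0) (I_y1 : I y1).
Hypotheses (fix0 : phi false y0 = y0) (fix1 : phi true y1 = y1) (y1_lt_y0 : y1 < y0).

Lemma letter_fixpt b : exists yb, is_fix [b] yb /\ y1 <= yb <= y0.
Proof. destruct b; [exists y1 | exists y0]; repeat split; auto; lra. Qed.

Lemma phi_toward_fix b t : I t -> exists yb, y1 <= yb <= y0 /\
  (t <= phi b t <= yb \/ yb <= phi b t <= t).
Proof.
  intros Ht. destruct (letter_fixpt b) as (yb & Hfix & Hyb). exists yb; split; [exact Hyb|].
  change (t <= phiw [b] t <= yb \/ yb <= phiw [b] t <= t).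
  destruct (Rle_or_lt t yb) as [H|H].
  - left. destruct (phiW_toward_fix_le [b] yb t Hfix Ht H). lra.
  - right. destruct (phiW_toward_fix_ge [b] yb t Hfix Ht (Rlt_le _ _ H)). lra.
Qed.

Lemma phiW_ge_stable w z t : z <= y1 -> I t -> z <= t -> z <= phiw w t.
Proof.
  intros Hz; revert t; induction w as [|b w IH]; intros t Ht Hzt; [exact Hzt|].
  rewrite phiW_cons. apply IH; [auto|].
  destruct (phi_toward_fix b t Ht) as (yb & Hyb & Hphi). lra.
Qed.

Lemma phiW_le_stable w z t : y0 <= z -> I t -> t <= z -> phiw w t <= z.
Proof.
  intros Hz; revert t; induction w as [|b w IH]; intros t Ht Hzt; [exact Hzt|].
  rewrite phiW_cons. apply IH; [auto|].
  destruct (phi_toward_fix b t Ht) as (yb & Hyb & Hphi). lra.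
Qed.

Lemma phi_band_stable b t : I t -> y1 <= t <= y0 -> y1 <= phi b t <= y0.
Proof. intros Ht Hband. destruct (phi_toward_fix b t Ht) as (yb & Hyb & Hphi). lra. Qed.

Lemma phi1_lt_phi0_band t : I t -> y1 <= t <= y0 -> phi true t < phi false t.
Proof.
  intros Ht [H1 [H0| ->]].
  - pose proof (phiL_gt_below_fix false y0 t I_y0 fix0 Ht H0).
    destruct (phiW_toward_fix_ge [true] y1 t (conj I_y1 fix1) Ht H1).
    change (phiw [true] t < phi false t). lra.
  - rewrite fix0. exact (phiL_lt_above_fix true y1 y0 I_y1 fix1 I_y0 y1_lt_y0).
Qed.

Variable x : R.
Hypothesis I_x : I x.

(* [traj k] is the paper's x_k, with x_0 := x; [letter k] is the threshold letter
   chosen at x_k, so that [letter 0 = true] and [x_{k+1} = phi_(letter k) x_k]. *)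
Definition traj (k : nat) : R :=
  match k with O => x | S j => orbit phi0 phi1 x j end.

Definition letter (k : nat) : bool := if Rle_dec x (traj k) then true else false.

Definition side (b : bool) (t : R) : Prop := if b then x <= t else t < x.

Definition preserves_side (w : word) (b : bool) : Prop :=
  forall t, I t -> side b t -> side b (phiw w t).

Lemma side_letter k : side (letter k) (traj k).
Proof. unfold letter, side. destruct Rle_dec; [assumption | lra]. Qed.

Lemma letter_of_side b k : side b (traj k) -> letter k = b.
Proof. unfold letter, side. destruct Rle_dec, b; auto; lra. Qed.

Lemma letter0_true : letter 0 = true.
Proof. apply letter_of_side. unfold side; simpl. lra. Qed.

Lemma traj_S k : traj (S k) = phi (letter k) (traj k).
Proof.
  destruct k; [rewrite letter0_true; reflexivity|].
  unfold letter; simpl. now destruct Rle_dec.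
Qed.

Lemma traj_in k : I (traj k).
Proof. induction k; [exact I_x|]. rewrite traj_S. auto. Qed.

Lemma traj_word w k : occurs_at letter k w -> traj (k + length w) = phiw w (traj k).
Proof.
  revert k; induction w as [|b w IH]; intros k Hocc; simpl length.
  - rewrite Nat.add_0_r. reflexivity.
  - apply occurs_at_cons in Hocc as [Hb Hocc].
    rewrite phiW_cons, <- Hb, <- traj_S, <- IH by exact Hocc. f_equal. lia.
Qed.

Lemma letter_after_word b v k : preserves_side (b :: v) b ->
  occurs_at letter k (b :: v) -> letter (k + length (b :: v)) = b.
Proof.
  intros Hpres Hocc. apply letter_of_side. rewrite traj_word by exact Hocc.
  apply occurs_at_cons in Hocc as [Hb _].
  apply Hpres; [apply traj_in|]. rewrite <- Hb. apply side_letter.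
Qed.

Lemma fixpt_preserves_side w (b : bool) y : is_fix w y ->
  (if b then x <= y else y <= x) -> preserves_side w b.
Proof.
  intros Hfix Hy t Ht Hside. unfold side in *. destruct b.
  - destruct (Rle_or_lt t y) as [H|H].
    + destruct (phiW_toward_fix_le w y t Hfix Ht H). lra.
    + destruct (phiW_toward_fix_ge w y t Hfix Ht (Rlt_le _ _ H)). lra.
  - destruct (Rle_or_lt y t) as [H|H].
    + destruct (phiW_toward_fix_ge w y t Hfix Ht H). lra.
    + destruct Hfix as [Hy' Hfix].
      destruct (phiW_contract w t y Ht Hy' H). lra.
Qed.

Lemma preserves_side_01 m y : is_fix (false :: true :: repeat false m) y -> y <= x ->
  preserves_side [false; true] false.
Proof.
  intros Hfix Hy t Ht Hside. unfold side in *.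
  (* Otherwise s := phi_01(x) > x while phi_(0^m)(s) <= x; as 0^m moves s toward y0,
     this forces y0 <= x, and then no letter can lift x above itself. *)
  destruct (Rlt_or_le (phiw [false; true] t) x) as [|Hge]; [assumption|exfalso].
  set (s := phiw [false; true] x).
  assert (Hs : x < s)
    by (unfold s; destruct (phiW_contract [false; true] t x Ht I_x Hside); lra).
  assert (Is : I s) by apply phiW_in, I_x.
  assert (Hback : phiw (repeat false m) s <= x)
    by exact (proj2 (phiW_toward_fix_ge _ y x Hfix I_x Hy)).
  assert (Hy0 : y0 <= x).
  { pose proof (is_fixpt_repeat false y0 m I_y0 fix0) as Hfix0.
    destruct (Rle_or_lt s y0) as [H|H].
    - destruct (phiW_toward_fix_le _ y0 s Hfix0 Is H). lra.
    - destruct (phiW_toward_fix_ge _ y0 s Hfix0 Is (Rlt_le _ _ H)). lra. }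
  pose proof (phiW_le_stable [false; true] x x Hy0 I_x (Rle_refl x)). fold s in H. lra.
Qed.

Lemma preserves_side_10 m y : is_fix (true :: false :: repeat true m) y -> x <= y ->
  preserves_side [true; false] true.
Proof.
  intros Hfix Hy t Ht Hside. unfold side in *.
  destruct (Rle_or_lt x (phiw [true; false] t)) as [|Hlt]; [assumption|exfalso].
  set (s := phiw [true; false] x).
  assert (Hs : s < x)
    by (unfold s; pose proof (phiW_le_mono [true; false] x t I_x Ht Hside); lra).
  assert (Is : I s) by apply phiW_in, I_x.
  assert (Hback : x <= phiw (repeat true m) s)
    by exact (proj1 (phiW_toward_fix_le _ y x Hfix I_x Hy)).
  assert (Hy1 : x <= y1).
  { pose proof (is_fixpt_repeat true y1 m I_y1 fix1) as Hfix1.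
    destruct (Rle_or_lt y1 s) as [H|H].
    - destruct (phiW_toward_fix_ge _ y1 s Hfix1 Is H). lra.
    - destruct (phiW_toward_fix_le _ y1 s Hfix1 Is (Rlt_le _ _ H)). lra. }
  pose proof (phiW_ge_stable [true; false] x x Hy1 I_x (Rle_refl x)). fold s in H. lra.
Qed.

Lemma letter1_false v y : is_fix (false :: v) y -> y <= x -> letter 1 = false.
Proof.
  intros Hfix Hy. apply letter_of_side. unfold side. change (phi true x < x).
  (* Otherwise x <= y1 < y0: phi0 lifts x strictly and no letter brings it back below x. *)
  destruct (Rlt_or_le (phi true x) x) as [|Hge]; [assumption|exfalso].
  assert (Hx1 : x <= y1).
  { destruct (Rle_or_lt x y1) as [|H]; [assumption|].
    pose proof (phiL_lt_above_fix true y1 x I_y1 fix1 I_x H). lra. }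
  assert (Hx0 : x < phi false x) by (apply (phiL_gt_below_fix false y0); auto; lra).
  pose proof (proj2 (phiW_toward_fix_ge _ y x Hfix I_x Hy)) as Hback.
  pose proof (phiW_ge_stable v x x Hx1 I_x (Rle_refl x)).
  destruct (phiW_contract v x (phi false x) I_x (phi_in false x I_x) Hx0).
  change (phiw v (phi false x) <= x) in Hback. lra.
Qed.

Lemma traj_band_stable K k : y1 <= traj K <= y0 -> (K <= k)%nat -> y1 <= traj k <= y0.
Proof.
  intros HK Hk. induction Hk as [|k Hk IH]; [exact HK|].
  rewrite traj_S. apply phi_band_stable; [apply traj_in | exact IH].
Qed.

(* On the band [y1, y0] the two maps differ, so there the threshold letter is forced. *)
Lemma omega_eq_letter_in_band pi j : follows phi0 phi1 x pi ->
  y1 <= traj (S j) <= y0 -> omega pi j = letter (S j).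
Proof.
  intros Hfol Hband.
  assert (E : phi (omega pi j) (traj (S j)) = phi (letter (S j)) (traj (S j)))
    by (rewrite <- traj_S; symmetry; exact (Hfol j)).
  pose proof (phi1_lt_phi0_band _ (traj_in (S j)) Hband).
  destruct (omega pi j), (letter (S j)); auto; simpl in *; lra.
Qed.

Lemma traj_outside_band : (forall j, ~ y1 <= traj (S j) <= y0) ->
  (forall j, traj (S j) < y1) \/ (forall j, y0 < traj (S j)).
Proof.
  intros Hout.
  assert (Hstep : forall j, (traj (S j) < y1 -> traj (S (S j)) < y1) /\
                            (y0 < traj (S j) -> y0 < traj (S (S j)))).
  { intros j. specialize (Hout (S j)). rewrite (traj_S (S j)) in *.
    destruct (phi_toward_fix (letter (S j)) _ (traj_in (S j))) as (yb & Hyb & Hphi).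
    split; intros H; lra. }
  destruct (Rlt_or_le (traj 1) y1) as [H1|H1]; [left|right]; intros j;
    induction j as [|j IH]; try apply Hstep; auto.
  specialize (Hout 0%nat). lra.
Qed.

Lemma letters_below_band : (forall j, traj (S j) < y1) -> forall j, letter (S j) = true.
Proof.
  intros Hbelow.
  assert (Hx : x < traj 1).
  { change (x < phi true x). apply (phiL_gt_below_fix true y1); auto.
    destruct (Rlt_or_le x y1) as [|H]; [assumption|].
    destruct (phiW_toward_fix_ge [true] y1 x (conj I_y1 fix1) I_x H).
    specialize (Hbelow 0%nat). simpl in Hbelow. change (phiw [true] x < y1) in Hbelow. lra. }
  intros j. apply letter_of_side. unfold side.
  induction j as [|j IH]; [lra|]. rewrite traj_S.
  destruct (letter_fixpt (letter (S j))) as (yb & [Iyb Hfix] & Hyb).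
  pose proof (phiL_gt_below_fix _ yb _ Iyb Hfix (traj_in (S j)) ltac:(specialize (Hbelow j); lra)).
  lra.
Qed.

Lemma letters_above_band : (forall j, y0 < traj (S j)) -> forall j, letter (S j) = false.
Proof.
  intros Habove.
  assert (Hx : traj 1 < x).
  { change (phi true x < x). apply (phiL_lt_above_fix true y1); auto.
    destruct (Rlt_or_le y1 x) as [|H]; [assumption|].
    destruct (phiW_toward_fix_le [true] y1 x (conj I_y1 fix1) I_x H).
    specialize (Habove 0%nat). simpl in Habove. change (y0 < phiw [true] x) in Habove. lra. }
  intros j. apply letter_of_side. unfold side.
  induction j as [|j IH]; [lra|]. rewrite traj_S.
  destruct (letter_fixpt (letter (S j))) as (yb & [Iyb Hfix] & Hyb).
  pose proof (phiL_lt_above_fix _ yb _ Iyb Hfix (traj_in (S j)) ltac:(specialize (Habove j); lra)).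
  lra.
Qed.

Lemma follows_of_letters b : (forall j, letter (S j) = b) -> follows phi0 phi1 x [b].
Proof. intros Hb j. rewrite omega_singleton, <- (Hb j). exact (traj_S (S j)). Qed.

(* Below the band, [phi0] pushes up by at least [phi0 y1 - y1 > 0] at each step. *)
Lemma not_follows_0_below_band : (forall j, traj (S j) < y1) -> ~ follows phi0 phi1 x [false].
Proof.
  intros Hbelow Hfol.
  pose proof (phiL_gt_below_fix false y0 y1 I_y0 fix0 I_y1 y1_lt_y0) as Hd.
  destruct (unbounded_of_drift (fun j => traj (S j)) (phi false y1 - y1) y1) as [j Hj].
  - lra.
  - intros j. change (traj (S j) + (phi false y1 - y1) <= orbit phi0 phi1 x (S j)).
    rewrite (Hfol j), omega_singleton. change (orbit phi0 phi1 x j) with (traj (S j)).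
    destruct (phi_contract false _ y1 (traj_in (S j)) I_y1 (Hbelow j)). lra.
  - specialize (Hbelow j). cbv beta in Hj. lra.
Qed.

Lemma not_follows_1_above_band : (forall j, y0 < traj (S j)) -> ~ follows phi0 phi1 x [true].
Proof.
  intros Habove Hfol.
  pose proof (phiL_lt_above_fix true y1 y0 I_y1 fix1 I_y0 y1_lt_y0) as Hd.
  destruct (unbounded_of_drift (fun j => - traj (S j)) (y0 - phi true y0) (- y0)) as [j Hj].
  - lra.
  - intros j. change (- traj (S j) + (y0 - phi true y0) <= - orbit phi0 phi1 x (S j)).
    rewrite (Hfol j), omega_singleton. change (orbit phi0 phi1 x j) with (traj (S j)).
    destruct (phi_contract true y0 _ I_y0 (traj_in (S j)) (Habove j)). lra.
  - specialize (Habove j). cbv beta in Hj. lra.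
Qed.

Lemma letters_eventually_omega pi : threshold_word phi0 phi1 x pi ->
  exists K, forall j, (K <= j)%nat -> omega pi j = letter (S j).
Proof.
  intros Hpi. pose proof Hpi as (_ & Hfol & _).
  destruct (classic (exists K, y1 <= traj (S K) <= y0)) as [[K HK]|Hout].
  - exists K. intros j Hj. apply omega_eq_letter_in_band; [exact Hfol|].
    apply (traj_band_stable (S K)); [exact HK | lia].
  - assert (Hconst : exists b, (forall j, letter (S j) = b) /\ ~ follows phi0 phi1 x [negb b]).
    { destruct traj_outside_band as [Hbelow|Habove].
      - intros j Hj. apply Hout. exists j. exact Hj.
      - exists true. split; [apply letters_below_band | apply not_follows_0_below_band]; auto.
      - exists false. split; [apply letters_above_band | apply not_follows_1_above_band]; auto. }
    destruct Hconst as (b & Hb & Hnb).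
    exists 0%nat. intros j _.
    rewrite (threshold_word_singleton _ _ _ _ b Hpi (follows_of_letters b Hb) Hnb).
    rewrite omega_singleton. symmetry. apply Hb.
Qed.

Lemma factor_occurs pi u : threshold_word phi0 phi1 x pi -> factor_of_omega u pi ->
  exists k, occurs_at letter (S k) u.
Proof.
  intros Hpi [i Hi]. destruct (letters_eventually_omega pi Hpi) as [K HK].
  assert (Hlen : (1 <= length pi)%nat)
    by (destruct Hpi as [Hne _]; destruct pi; [congruence | simpl; lia]).
  exists (i + K * length pi)%nat. intros e He.
  change (letter (S (i + K * length pi + e)) = nth e u false).
  rewrite <- HK by (pose proof (Nat.mul_le_mono_l _ _ K Hlen); lia).
  rewrite <- (Hi e He).
  replace (i + K * length pi + e)%nat with (i + e + K * length pi)%nat by lia.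
  apply omega_periodic.
Qed.

Variable pi : word.
Hypothesis threshold_pi : threshold_word phi0 phi1 x pi.

Lemma no_factor_zeros m y : is_fix (true :: repeat false m) y -> x <= y ->
  ~ factor_of_omega (repeat false (S m)) pi.
Proof.
  intros Hfix Hy Hfac. destruct (factor_occurs pi _ threshold_pi Hfac) as [k Hk].
  apply (no_run letter false m 0 letter0_true) with (S k); [|lia | exact Hk].
  intros j _. apply letter_after_word, (fixpt_preserves_side _ true y Hfix Hy).
Qed.

Lemma no_factor_ones m y : is_fix (false :: repeat true m) y -> y <= x ->
  ~ factor_of_omega (repeat true (S m)) pi.
Proof.
  intros Hfix Hy Hfac. destruct (factor_occurs pi _ threshold_pi Hfac) as [k Hk].
  apply (no_run letter true m 1 (letter1_false _ y Hfix Hy)) with (S k); [|lia | exact Hk].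
  intros j _. apply letter_after_word, (fixpt_preserves_side _ false y Hfix Hy).
Qed.

Lemma no_factor_one_zeros_one m y : is_fix (false :: true :: repeat false m) y -> y <= x ->
  ~ factor_of_omega (true :: repeat false m ++ [true]) pi.
Proof.
  intros Hfix Hy Hfac. destruct (factor_occurs pi _ threshold_pi Hfac) as [k Hk].
  pose proof (letter1_false _ y Hfix Hy) as H1.
  apply (no_enclosed_run letter true m 1 H1) with (S k); [| |lia | exact Hk].
  - apply (no_run letter true 1 1 H1).
    intros j _. apply letter_after_word, (preserves_side_01 m y Hfix Hy).
  - intros j _. apply letter_after_word, (fixpt_preserves_side _ false y Hfix Hy).
Qed.

Lemma no_factor_zero_ones_zero m y : is_fix (true :: false :: repeat true m) y -> x <= y ->
  ~ factor_of_omega (false :: repeat true m ++ [false]) pi.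
Proof.
  intros Hfix Hy Hfac. destruct (factor_occurs pi _ threshold_pi Hfac) as [k Hk].
  apply (no_enclosed_run letter false m 0 letter0_true) with (S k); [| |lia | exact Hk].
  - apply (no_run letter false 1 0 letter0_true).
    intros j _. apply letter_after_word, (preserves_side_10 m y Hfix Hy).
  - intros j _. apply letter_after_word, (fixpt_preserves_side _ true y Hfix Hy).
Qed.

End Dynamics.

Theorem mainTheorem6 (I : R -> Prop) (phi0 phi1 : R -> R) (x : R) (pi : word) (n : nat) :
  is_interval I -> A2 I phi0 phi1 -> I x ->
  threshold_word phi0 phi1 x pi -> (1 <= n)%nat ->
  ((exists y, is_fixpt I phi0 phi1 (true :: repeat false (n - 1)) y /\ x <= y) ->
     ~ factor_of_omega (repeat false n) pi) /\
  ((exists y, is_fixpt I phi0 phi1 (false :: true :: repeat false (n - 1)) y /\ y <= x) ->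
     ~ factor_of_omega (true :: repeat false (n - 1) ++ [true]) pi) /\
  ((exists y, is_fixpt I phi0 phi1 (false :: repeat true (n - 1)) y /\ y <= x) ->
     ~ factor_of_omega (repeat true n) pi) /\
  ((exists y, is_fixpt I phi0 phi1 (true :: false :: repeat true (n - 1)) y /\ x <= y) ->
     ~ factor_of_omega (false :: repeat true (n - 1) ++ [false]) pi).
Proof.
  intros _ HA Hx Hpi Hn.
  destruct HA as (Hin0 & Hin1 & Hcontract & y0 & y1 & Hy0 & Hy1 & Hfix0 & Hfix1 & Hy10).
  assert (Hin : forall b t, I t -> I (phiL phi0 phi1 b t)) by (intros [] t; auto).
  destruct n as [|m]; [lia|]. replace (S m - 1)%nat with m by lia.
  repeat split; intros (y & Hfix & Hy).
  - apply (no_factor_zeros I phi0 phi1 Hin Hcontract y0 y1) with (x := x) (y := y);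
      assumption.
  - apply (no_factor_one_zeros_one I phi0 phi1 Hin Hcontract y0 y1) with (x := x) (y := y);
      assumption.
  - apply (no_factor_ones I phi0 phi1 Hin Hcontract y0 y1) with (x := x) (y := y);
      assumption.
  - apply (no_factor_zero_ones_zero I phi0 phi1 Hin Hcontract y0 y1) with (x := x) (y := y);
      assumption.
Qed.
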